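(* Let $q$ be a prime power, let $n,k$ be integers with $3\le k\le n-2\le q-2$, and let $h=(k-1)+r$ with $k-1\le r\le q-k-1$. Let $\alpha_1,\dots,\alpha_n\in\mathbb{F}_q$ be pairwise distinct, let $G_{h,k}$ be the $k\times n$ matrix whose rows are $(\alpha_1^{e},\dots,\alpha_n^{e})$ for $e=0,1,\dots,k-2$ and $e=h$, let $\mathbf v=(v_1,\dots,v_n)\in(\mathbb{F}_q^* )^n$ and let $C_{h,\mathbf v}$ be the linear code generated by $G_{h,k}\cdot\mathrm{diag}(v_1,\dots,v_n)$. Let $u_i=\prod_{j\ne i}(\alpha_i-\alpha_j)^{-1}$ and $S_t=S_t(\alpha_1,\dots,\alpha_n)$. Then $C_{h,\mathbf v}$ is self-orthogonal if and only if there exists a polynomial $f(x)=\sum_{j=0}^{n-2k+2}f_jx^j\in\mathbb{F}_q[x]$ such that (1) $v_i^2=u_if(\alpha_i)$ for all $1\le i\le n$; (2) $\sum_{j=b}^{b+2r+1}f_jS_{j-b}=0$, where $b=n-2k-2r+1$; (3) for every $l$ with $(k-1)+r\le l\le(2k-3)+r$, $\sum_{j=s}^{s+l-2k+3}f_jS_{j-s}=0$, where $s=n-l-1$; here $f_j=0$ for $j<0$.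
   Context: Convention: $0^0=1$. $S_t(x_1,\dots,x_m)=\sum_{t_1+\dots+t_m=t,\ t_i\ge0}x_1^{t_1}\cdots x_m^{t_m}$ is the complete homogeneous symmetric polynomial of degree $t$ ($S_0=1$). A linear code $C$ is self-orthogonal if $C\subseteq C^\perp$ (Euclidean dual). *)

From HB Require Import structures.
From mathcomp Require Import all_boot all_order all_algebra all_field.
Set Implicit Arguments. Unset Strict Implicit. Unset Printing Implicit Defensive.
Import GRing.Theory.
Local Open Scope ring_scope.

(* Complete homogeneous symmetric polynomial S_t evaluated at x_1..x_n:
   sum over exponent vectors (t_1,..,t_n) with t_i >= 0, sum = t. *)
Definition Shom (F : fieldType) (n t : nat) (x : 'I_n -> F) : F :=
  \sum_(m : {ffun 'I_n -> 'I_t.+1} | (\sum_i (m i : nat))%N == t)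
     \prod_i x i ^+ (m i).

Definition coefz (F : fieldType) (f : {poly F}) (z : int) : F :=
  match z with Posz m => f`_m | Negz _ => 0 end.

Definition in_code (F : fieldType) (k n : nat) (M : 'M[F]_(k, n)) (x : 'rV[F]_n) :=
  (x <= M)%MS.

Definition in_dual (F : fieldType) (k n : nat) (M : 'M[F]_(k, n)) (y : 'rV[F]_n) :=
  forall x, in_code M x -> x *m y^T = 0.

Definition self_orthogonal (F : fieldType) (k n : nat) (M : 'M[F]_(k, n)) :=
  forall x, in_code M x -> in_dual M x.

Definition Ghk (F : fieldType) (k n h : nat) (alpha : 'I_n -> F) : 'M[F]_(k, n) :=
  \matrix_(i < k, j < n) alpha j ^+ (if (i < k.-1)%N then (i : nat) else h).

Definition uvec (F : fieldType) (n : nat) (alpha : 'I_n -> F) (i : 'I_n) : F :=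
  \prod_(j < n | j != i) (alpha i - alpha j)^-1.

From HB Require Import structures.
From mathcomp Require Import all_boot all_order all_algebra all_field.
From mathcomp Require Import zify ring.
Set Implicit Arguments.
Unset Strict Implicit.
Unset Printing Implicit Defensive.
Import GRing.Theory.
Local Open Scope ring_scope.

(* With u_i = prod_{j <> i} (alpha_i - alpha_j)^-1, the key identity is
     sum_i u_i alpha_i^p = S_{p+1-n}(alpha)   (and 0 when p + 1 < n):
   both sides, as functions of the set of nodes, satisfy the divided-difference
   recursion (alpha_a - alpha_b) T(A) = T(A \ b) - T(A \ a).
   The code is self-orthogonal iff W(m) = sum_i v_i^2 alpha_i^m vanishes for every
   sum m of two row exponents of G_{h,k}, i.e. for m <= 2k-4, for h <= m <= h+k-2
   and for m = 2h.  Writing v_i^2 = u_i f(alpha_i) with deg f < n (Lagrange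
   interpolation), the identity gives W(m) = sum_j f_j S_{j+m+1-n}.  Vanishing for
   small m forces deg f <= n-2k+2, because W(n-1-deg f) is the leading coefficient
   of f, and the two remaining ranges of m are exactly conditions (2) and (3). *)

Lemma coefz_lt0 (F : fieldType) (f : {poly F}) (z : int) : (z < 0)%R -> coefz f z = 0.
Proof. by case: z. Qed.

Lemma coefz0 (F : fieldType) (z : int) : coefz (0 : {poly F}) z = 0.
Proof. by case: z => m; rewrite /= ?coef0. Qed.

Section PowerSums.
Variables (F : fieldType) (n : nat) (alpha : 'I_n -> F).
Hypothesis alpha_inj : injective alpha.

(* The divided difference of x^p at the nodes alpha_i, i in A. *)
Definition lagr_sum (A : {set 'I_n}) (p : nat) : F :=
  \sum_(i in A) alpha i ^+ p * \prod_(j in A | j != i) (alpha i - alpha j)^-1.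

Definition geom_poly (N : nat) (a : F) : {poly F} := \sum_(e < N) (a *: 'X) ^+ e.

(* S_t of the nodes alpha_i, i in A: the coefficient of x^t in the product of the
   geometric series 1/(1 - alpha_i x), truncated after degree t. *)
Definition hsym (A : {set 'I_n}) (t : nat) : F :=
  (\prod_(i in A) geom_poly t.+1 (alpha i))`_t.

Lemma alpha_subr_neq0 i j : i != j -> alpha i - alpha j != 0.
Proof. by move=> ij; rewrite subr_eq0; apply: contra ij => /eqP /alpha_inj ->. Qed.

Lemma lagr_sumD1 (A : {set 'I_n}) b p : b \in A ->
  lagr_sum A p.+1 = alpha b * lagr_sum A p + lagr_sum (A :\ b) p.
Proof.
move=> bA; apply/eqP; rewrite addrC -subr_eq eq_sym; apply/eqP.
rewrite /lagr_sum mulr_sumr -sumrB (big_setD1 b bA) /= mulrA -exprS subrr add0r.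
apply: eq_bigr => i; rewrite in_setD1 => /andP [ib iA].
rewrite [in RHS](bigD1 b) /=; last by rewrite bA eq_sym.
have -> : \prod_(j | (j \in A) && (j != i) && (j != b)) (alpha i - alpha j)^-1 =
          \prod_(j in A :\ b | j != i) (alpha i - alpha j)^-1.
  by apply: eq_bigl => j; rewrite in_setD1; case: (j \in A); case: (j == b); case: (j == i).
set P := \prod_(j in A :\ b | j != i) _; rewrite exprS.
set d := alpha i - alpha b; have d_neq0 : d != 0 by rewrite alpha_subr_neq0.
have -> : forall x y : F, alpha i * x * (d^-1 * y) - alpha b * (x * (d^-1 * y)) =
          d * d^-1 * (x * y) by move=> x y; rewrite /d; ring.
by rewrite mulfV // mul1r.
Qed.

Lemma lagr_sum_diff (A : {set 'I_n}) a b p : a \in A -> b \in A ->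
  (alpha a - alpha b) * lagr_sum A p = lagr_sum (A :\ b) p - lagr_sum (A :\ a) p.
Proof.
move=> aA bA; have := lagr_sumD1 p aA; rewrite (lagr_sumD1 p bA) => E.
apply/eqP; rewrite -subr_eq0; apply/eqP.
transitivity (alpha a * lagr_sum A p + lagr_sum (A :\ a) p -
              (alpha b * lagr_sum A p + lagr_sum (A :\ b) p)); first by ring.
by rewrite -E subrr.
Qed.

Lemma coef_geom_poly N a j : (geom_poly N a)`_j = if (j < N)%N then a ^+ j else 0.
Proof.
rewrite /geom_poly (eq_bigr (fun e : 'I_N => a ^+ e *: 'X^e)) => [|e _].
  by rewrite -poly_def coef_poly.
by rewrite exprZn.
Qed.

Lemma mulr_geom_poly N a : (1 - a *: 'X) * geom_poly N a = 1 - (a *: 'X) ^+ N.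
Proof. by rewrite -opprB mulNr -subrX1 opprB. Qed.

Lemma coef_prod_geom_poly (A : {set 'I_n}) N t : (t < N)%N ->
  (\prod_(i in A) geom_poly N (alpha i))`_t = hsym A t.
Proof.
move=> tN; rewrite /hsym.
suff : forall j, (j <= t)%N -> (\prod_(i in A) geom_poly N (alpha i))`_j =
                                (\prod_(i in A) geom_poly t.+1 (alpha i))`_j by apply.
apply: (big_ind2 (fun p q : {poly F} => forall j, (j <= t)%N -> p`_j = q`_j)) => //.
  move=> p1 q1 p2 q2 e1 e2 j jt; rewrite !coefM; apply: eq_bigr => i _.
  by rewrite e1 ?e2 //; have := ltn_ord i; lia.
by move=> i _ j jt; rewrite !coef_geom_poly ifT ?ifT //; lia.
Qed.

Lemma hsym_set0 t : hsym set0 t = (t == 0)%:R.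
Proof. by rewrite /hsym big_set0 coef1. Qed.

Lemma hsym_set1 b t : hsym [set b] t = alpha b ^+ t.
Proof. by rewrite /hsym big_set1 coef_geom_poly ltnSn. Qed.

Lemma hsym0 (A : {set 'I_n}) : hsym A 0 = 1.
Proof. by rewrite /hsym big1 ?coef1 // => i _; rewrite /geom_poly big_ord1. Qed.

Lemma hsymD1 (A : {set 'I_n}) b t : b \in A ->
  hsym A t.+1 = alpha b * hsym A t + hsym (A :\ b) t.+1.
Proof.
move=> bA.
have E : (1 - alpha b *: 'X) * \prod_(i in A) geom_poly t.+2 (alpha i) =
         (1 - (alpha b *: 'X) ^+ t.+2) * \prod_(i in A :\ b) geom_poly t.+2 (alpha i).
  by rewrite (big_setD1 b bA) /= mulrA mulr_geom_poly.
have := congr1 (fun p : {poly F} => p`_t.+1) E.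
rewrite !mulrBl !mul1r exprZn -!scalerAl !coefB !coefZ coefXM coefXnM /= ltnSn.
rewrite (coef_prod_geom_poly A (leqnSn t.+1)) mulr0 subr0 => E'.
by rewrite [hsym (A :\ b) _]/hsym -E' addrC subrK.
Qed.

Lemma hsym_diff (A : {set 'I_n}) a b t : a \in A -> b \in A ->
  (alpha a - alpha b) * hsym A t = hsym (A :\ b) t.+1 - hsym (A :\ a) t.+1.
Proof.
move=> aA bA; have := hsymD1 t aA; rewrite (hsymD1 t bA) => E.
apply/eqP; rewrite -subr_eq0; apply/eqP.
transitivity (alpha a * hsym A t + hsym (A :\ a) t.+1 -
              (alpha b * hsym A t + hsym (A :\ b) t.+1)); first by ring.
by rewrite -E subrr.
Qed.

Lemma lagr_sum_hsym (A : {set 'I_n}) p :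
  lagr_sum A p = if (#|A| <= p.+1)%N then hsym A (p.+1 - #|A|) else 0.
Proof.
move cA : #|A| => c; elim: c A p cA => [|c IH] A p cA.
  by rewrite (cards0_eq cA) /lagr_sum big_set0 hsym_set0 subn0.
case: c IH cA => [|c] IH cA.
  have [b ->] := cards1P (introT eqP cA); rewrite /lagr_sum big_set1 hsym_set1 subSS subn0.
  by rewrite big_pred0 ?mulr1 // => j; rewrite in_set1 andbN.
have [b bA] : exists b, b \in A by apply/card_gt0P; rewrite cA.
have cAb : #|A :\ b| = c.+1 by move: cA; rewrite (cardsD1 b) bA add1n => -[].
have [a /setD1P [ab aA]] : exists a, a \in A :\ b by apply/card_gt0P; rewrite cAb.
have cAa : #|A :\ a| = c.+1 by move: cA; rewrite (cardsD1 a) aA add1n => -[].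
apply: (mulfI (alpha_subr_neq0 ab)); rewrite lagr_sum_diff // !IH //.
case: (ltngtP c p) => [cp | pc | <-].
- have -> : (p.+1 - c.+1 = (p.+1 - c.+2).+1)%N by lia.
  by rewrite !ifT -?hsym_diff //; lia.
- by rewrite !ifF ?subrr ?mulr0 //; lia.
- by rewrite ltnn ltnSn subnn !hsym0 subrr mulr0.
Qed.

Lemma Shom_hsym t : Shom t alpha = hsym setT t.
Proof.
rewrite /hsym (eq_bigl predT) => [|i]; last by rewrite in_setT.
rewrite /geom_poly bigA_distr_bigA /=.
under eq_bigr => m _.
  rewrite (eq_bigr (fun i => alpha i ^+ m i *: 'X^(m i))) => [|i _]; last by rewrite exprZn.
  rewrite scaler_prod -expr_sum.
  over.
by rewrite coef_sumMXn.
Qed.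

Lemma sum_uvec_expr p : \sum_i uvec alpha i * alpha i ^+ p =
  if (n <= p.+1)%N then Shom (p.+1 - n) alpha else 0.
Proof.
have -> : \sum_i uvec alpha i * alpha i ^+ p = lagr_sum setT p.
  rewrite /lagr_sum; apply: eq_big => [i | i _]; first by rewrite in_setT.
  rewrite mulrC /uvec; congr (_ * _).
  by apply: eq_bigl => j; rewrite in_setT.
by rewrite lagr_sum_hsym cardsT card_ord Shom_hsym.
Qed.

Lemma Shom0 : Shom 0 alpha = 1.
Proof. by rewrite Shom_hsym hsym0. Qed.

Lemma sum_uvec_horner_Shom (f : {poly F}) d m L :
  (size f <= d)%N -> (0 < d -> d + m < n + L)%N ->
  \sum_i uvec alpha i * f.[alpha i] * alpha i ^+ m =
  \sum_(t < L) coefz f (n%:Z - m%:Z - 1 + t%:Z) * Shom t alpha.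
Proof.
move=> sf dmL; have [d0 | /dmL {}dmL] := posnP d.
  have /eqP -> : f == 0 by rewrite -size_poly_eq0 -leqn0 -d0.
  by rewrite !big1 // => [t _ | i _]; rewrite ?coefz0 ?horner0 !(mulr0, mul0r).
have expand K : (size f <= K)%N ->
    \sum_i uvec alpha i * f.[alpha i] * alpha i ^+ m =
    \sum_(j < K) f`_j * if (n <= (j + m).+1)%N then Shom ((j + m).+1 - n) alpha else 0.
  move=> sK; under eq_bigr do rewrite (horner_coef_wide _ sK) mulr_sumr mulr_suml.
  rewrite exchange_big; apply: eq_bigr => j _; rewrite -sum_uvec_expr mulr_sumr.
  by apply: eq_bigr => i _; rewrite exprD; ring.
have [mn | nm] := ltnP m n.
  rewrite (expand (n - m.+1 + L)%N); last by lia.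
  rewrite big_split_ord /= big1 ?add0r => [|j _]; last by rewrite ifF ?mulr0 //; have := ltn_ord j; lia.
  apply: eq_bigr => t _; rewrite ifT; last by lia.
  have -> : n%:Z - m%:Z - 1 + t%:Z = (n - m.+1 + t)%N :> int by lia.
  by congr (_ * Shom _ _); lia.
rewrite (expand (L - (m.+1 - n))%N); last by lia.
rewrite -[in RHS](@subnKC (m.+1 - n) L); last by lia.
rewrite [RHS]big_split_ord /= [X in _ = X + _]big1 ?add0r => [|t _]; last first.
  by rewrite coefz_lt0 ?mul0r //; have := ltn_ord t; lia.
apply: eq_bigr => j _; rewrite ifT; last by lia.
have -> : n%:Z - m%:Z - 1 + (m.+1 - n + j)%N%:Z = j%:Z by lia.
by congr (_ * Shom _ _); lia.
Qed.

(* The moment of order n - size f is the leading coefficient of f. *)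
Lemma size_poly_uvec_moments (f : {poly F}) d : (size f <= n)%N ->
    (forall m, (m + d < n)%N -> \sum_i uvec alpha i * f.[alpha i] * alpha i ^+ m = 0) ->
  (size f <= d)%N.
Proof.
move=> sfn f_moments; rewrite leqNgt; apply/negP => dsf.
have := f_moments (n - size f)%N ltac:(lia).
rewrite (@sum_uvec_horner_Shom f (size f) _ 1) ?big_ord1 ?Shom0 ?mulr1 //; last by lia.
rewrite [X in coefz f X](_ : _ = (size f - 1)%N :> int) /=; last first.
  by set s := size f in sfn dsf *; lia.
rewrite subn1 -lead_coefE => /eqP; rewrite lead_coef_eq0 -size_poly_eq0; lia.
Qed.

Lemma uvec_interpolation (w : 'I_n -> F) :
  exists2 g : {poly F}, (size g <= n)%N & forall i, w i = uvec alpha i * g.[alpha i].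
Proof.
pose basis i := \prod_(j | j != i) ('X - (alpha j)%:P).
exists (\sum_i w i *: basis i).
  apply: (leq_trans (size_sum _ _ _)); apply/bigmax_leqP => i _.
  apply: (leq_trans (size_scale_leq _ _)).
  rewrite size_prod => [|j _]; last by rewrite polyXsubC_eq0.
  under eq_bigr do rewrite size_XsubC.
  by rewrite sum_nat_const cardC1 card_ord natn; have := ltn_ord i; lia.
move=> i; rewrite horner_sum (bigD1 i) //= big1 ?addr0 => [|j ji]; last first.
  rewrite hornerZ horner_prod (bigD1 i) 1?eq_sym //=.
  by rewrite hornerXsubC subrr mul0r mulr0.
rewrite hornerZ horner_prod; under eq_bigr do rewrite hornerXsubC.
rewrite /uvec prodfV mulrCA mulVf ?mulr1 //; apply/prodf_neq0 => j ji.
by rewrite alpha_subr_neq0 // eq_sym.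
Qed.

End PowerSums.

Lemma self_orthogonalP (F : fieldType) k n (M : 'M[F]_(k, n)) :
  self_orthogonal M <-> M *m M^T = 0.
Proof.
split=> [M_so | MMt0].
  apply/matrixP => a b; rewrite mxE [RHS]mxE.
  have /matrixP/(_ 0 0) E := M_so _ (row_sub b M) _ (row_sub a M).
  rewrite mxE [RHS]mxE in E; rewrite -[in RHS]E.
  by apply: eq_bigr => j _; rewrite !mxE.
move=> x /submxP [c ->] y /submxP [d ->].
by rewrite trmx_mul mulmxA -(mulmxA d) MMt0 mulmx0 mul0mx.
Qed.

Definition Ghk_exp (k h : nat) (a : 'I_k) : nat := if (a < k.-1)%N then (a : nat) else h.

Lemma self_orthogonal_Ghk (F : fieldType) n k h (alpha v : 'I_n -> F) :
  self_orthogonal (Ghk k h alpha *m diag_mx (\row_j v j)) <->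
  forall a b : 'I_k, \sum_j v j ^+ 2 * alpha j ^+ (Ghk_exp h a + Ghk_exp h b) = 0.
Proof.
set M := Ghk k h alpha *m _.
have gram a b : (M *m M^T) a b =
    \sum_j v j ^+ 2 * alpha j ^+ (Ghk_exp h a + Ghk_exp h b).
  by rewrite /M mul_mx_diag !mxE; apply: eq_bigr => j _; rewrite !mxE exprD /Ghk_exp; ring.
rewrite self_orthogonalP; split=> [MMt0 a b | Gram0]; first by rewrite -gram MMt0 mxE.
by apply/matrixP => a b; rewrite gram Gram0 mxE.
Qed.

Lemma Ghk_exp_pairs (P : nat -> Prop) k h : (1 < k)%N ->
  (forall a b : 'I_k, P (Ghk_exp h a + Ghk_exp h b)%N) <->
  [/\ forall m, (m <= 2 * k - 4)%N -> P m,
      forall x, (x <= k - 2)%N -> P (h + x)%N & P (h + h)%N].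
Proof.
move=> k_gt1.
have exp_low (a : 'I_k) : (a < k.-1)%N -> Ghk_exp h a = a by rewrite /Ghk_exp => ->.
have exp_last (a : 'I_k) : a = k.-1 :> nat -> Ghk_exp h a = h.
  by rewrite /Ghk_exp => ->; rewrite ltnn.
have last_k : (k.-1 < k)%N by lia.
split=> [P_pairs | [P_low P_mid P_top] a b].
  split=> [m mk | x xk |].
  - have ak : (minn m (k - 2) < k)%N by lia.
    have bk : (m - minn m (k - 2) < k)%N by lia.
    have := P_pairs (Ordinal ak) (Ordinal bk).
    by rewrite !exp_low /= ?subnKC ?geq_minl //; lia.
  - have x_lt_k : (x < k)%N by lia.
    have := P_pairs (Ordinal last_k) (Ordinal x_lt_k).
    by rewrite exp_last ?exp_low //=; lia.
  - by have := P_pairs (Ordinal last_k) (Ordinal last_k); rewrite !exp_last.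
rewrite /Ghk_exp; have := ltn_ord a; have := ltn_ord b.
case: ifP => ak; case: ifP => bk ? ?.
- by apply: P_low; lia.
- by rewrite addnC; apply: P_mid; lia.
- by apply: P_mid; lia.
- exact: P_top.
Qed.

Theorem theorem4p12 (F : finFieldType) (n k r h : nat)
  (hk3 : (3 <= k)%N) (hkn : (k <= n - 2)%N) (hnq : (n - 2 <= #|F| - 2)%N)
  (hh : h = (k - 1 + r)%N) (hr1 : (k - 1 <= r)%N) (hr2 : (r <= #|F| - k - 1)%N)
  (alpha : 'I_n -> F) (halpha : injective alpha)
  (v : 'I_n -> F) (hv : forall i, v i != 0) :
  self_orthogonal (Ghk k h alpha *m diag_mx (\row_j v j)) <->
  exists f : {poly F},
    (size f <= n + 3 - 2 * k)%N /\
    (forall i, v i ^+ 2 = uvec alpha i * f.[alpha i]) /\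
    (let b : int := n%:Z - 2 * k%:Z - 2 * r%:Z + 1 in
     \sum_(t < (2 * r + 2)%N) coefz f (b + t%:Z) * Shom t alpha = 0) /\
    (forall l : nat, (k - 1 + r <= l)%N -> (l <= 2 * k - 3 + r)%N ->
       let s : int := n%:Z - l%:Z - 1 in
       \sum_(t < (l + 4 - 2 * k)%N) coefz f (s + t%:Z) * Shom t alpha = 0).
Proof.
pose W m := \sum_i v i ^+ 2 * alpha i ^+ m.
apply: (iff_trans (self_orthogonal_Ghk _ _ _ _)).
apply: (iff_trans (Ghk_exp_pairs (fun m => W m = 0) _ _)); first by lia.
have W_Shom (f : {poly F}) : (size f <= n + 3 - 2 * k)%N ->
    (forall i, v i ^+ 2 = uvec alpha i * f.[alpha i]) ->
    forall m L, (n + 3 + m < 2 * k + n + L)%N ->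
    W m = \sum_(t < L) coefz f (n%:Z - m%:Z - 1 + t%:Z) * Shom t alpha.
  move=> sf vf m L mL; rewrite -(sum_uvec_horner_Shom halpha sf); last by lia.
  by apply: eq_bigr => i _; rewrite vf.
have top_index : n%:Z - 2 * k%:Z - 2 * r%:Z + 1 = n%:Z - (h + h)%N%:Z - 1 by lia.
split=> [[W_low W_mid W_top] | [f [sf [vf [top mid]]]]].
  have [g sgn vg] := uvec_interpolation halpha (fun i => v i ^+ 2).
  have sg : (size g <= n + 3 - 2 * k)%N.
    apply: (size_poly_uvec_moments halpha) => // m mn.
    rewrite -[RHS](W_low m); last by lia.
    by apply: eq_bigr => i _; rewrite vg.
  exists g; do !split => //=.
    by rewrite top_index -W_Shom //; lia.
  move=> l hl1 hl2; rewrite -W_Shom //; last by lia.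
  by rewrite -(subnKC (_ : h <= l)%N) ?W_mid //; lia.
split=> [m mk | x xk |].
- by rewrite (W_Shom f sf vf m 0) ?big_ord0 //; lia.
- by rewrite (W_Shom f sf vf _ (h + x + 4 - 2 * k)%N) ?mid //; lia.
- by rewrite (W_Shom f sf vf _ (2 * r + 2)%N) -?top_index //; lia.
Qed.
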